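(* Let $V$ be an irreducible $\tau$-module with finite-dimensional weight spaces, and let $z\in\mathcal Z$ be homogeneous of degree $\underline m$ acting non-trivially on $V$. Then there exists a central operator $T$ on $V$ of degree $-\underline m$ (not necessarily given by an element of $\mathcal Z$) such that $Tz=zT=\mathrm{Id}_V$.
   Context: Let $\mathring{\mathfrak g}$ be a finite-dimensional simple Lie algebra over $\mathbb C$ with Cartan subalgebra $\mathring{\mathfrak h}$ and a nondegenerate invariant symmetric bilinear form $(\cdot,\cdot)$. Fix $n\ge2$, $A=\mathbb C[t_1^{\pm1},\dots,t_n^{\pm1}]$, $t^{\underline m}=t_1^{m_1}\cdots t_n^{m_n}$. Let $\mathcal Z$ be spanned by symbols $t^{\underline m}K_i$ subject to $\sum_im_it^{\underline m}K_i=0$; $K_i=t^0K_i$; $d(t^{\underline r})t^{\underline s}=\sum_ir_it^{\underline r+\underline s}K_i$. The toroidal Lie algebra $\tau=\mathring{\mathfrak g}\otimes A\oplus\mathcal Z\oplus D$, $D=\mathrm{span}(d_1,\dots,d_n)$, has bracket $[X\otimes t^{\underline r},Y\otimes t^{\underline s}]=[X,Y]\otimes t^{\underline r+\underline s}+(X,Y)d(t^{\underline r})t^{\underline s}$, $\mathcal Z$ central in $\mathring{\mathfrak g}\otimes A\oplus\mathcal Z$, $[d_i,X\otimes t^{\underline r}]=r_iX\otimes t^{\underline r}$, $[d_i,t^{\underline m}K_j]=m_it^{\underline m}K_j$, $[d_i,d_j]=0$. Weight spaces are with respect to $\underline{\mathfrak h}=\mathring{\mathfrak h}\oplus\mathrm{span}(K_i)\oplus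 D$. An element of $\mathcal Z$ is homogeneous of degree $\underline m$ if it is a combination of the $t^{\underline m}K_i$. A central operator of degree $\underline m$ on $V$ is a linear map $T:V\to V$ commuting with the action of $\mathring{\mathfrak g}\otimes A\oplus\mathcal Z$ and satisfying $d_iT-Td_i=m_iT$ for all $i$. *)

From HB Require Import structures.
From mathcomp Require Import all_boot all_order all_algebra.
From mathcomp Require Import complex Rstruct.
Set Implicit Arguments. Unset Strict Implicit. Unset Printing Implicit Defensive.
Import Order.TTheory GRing.Theory Num.Theory.
Local Open Scope ring_scope.

Definition CC : numClosedFieldType := complex Rdefinitions.R.

Section LieAlgebra.
Variable g : vectType CC.
Variable br : g -> g -> g.

Definition is_lie_bracket : Prop :=
  [/\ (forall (a : CC) (x y z : g), br (a *: x + y) z = a *: br x z + br y z),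
      (forall (a : CC) (x y z : g), br x (a *: y + z) = a *: br x y + br x z),
      (forall x : g, br x x = 0) &
      (forall x y z : g, br x (br y z) + br y (br z x) + br z (br x y) = 0)].

Definition lie_ideal (I : {vspace g}) : Prop :=
  forall x y : g, y \in I -> br x y \in I.

Definition simple_lie : Prop :=
  is_lie_bracket /\
  (exists x y : g, br x y != 0) /\
  (forall I : {vspace g}, lie_ideal I -> I = 0%VS \/ I = fullv).

Definition lie_subalgebra (h : {vspace g}) : Prop :=
  forall x y : g, x \in h -> y \in h -> br x y \in h.

Definition iter_br (xs : seq g) (x0 : g) : g := foldr br x0 xs.

(** Cartan subalgebra: a nilpotent self-normalizing subalgebra *)
Definition cartan_subalgebra (h : {vspace g}) : Prop :=
  [/\ lie_subalgebra h,
      (exists k : nat, forall (xs : seq g) (x0 : g), size xs = k ->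
          all (fun x => x \in h) xs -> x0 \in h -> iter_br xs x0 = 0) &
      (forall x : g, (forall y : g, y \in h -> br x y \in h) -> x \in h)].

Definition nondeg_invariant_symmetric_form (form : g -> g -> CC) : Prop :=
  [/\ (forall (a : CC) (x y z : g), form (a *: x + y) z = a * form x z + form y z),
      (forall x y : g, form x y = form y x),
      (forall x y z : g, form (br x y) z = form x (br y z)) &
      (forall x : g, (forall y : g, form x y = 0) -> x = 0)].
End LieAlgebra.

(** * Modules over the toroidal Lie algebra
    tau = g (x) A  (+)  Z  (+)  D,  A = CC[t_1^{+-1},...,t_n^{+-1}].
    Multi-indices r in Z^n are row vectors ['rV[int]_n], r_i = r 0 i.
    A tau-module structure on V is the same as a Lie algebra homomorphism
    tau -> gl(V); since tau is spanned by the elements X (x) t^r,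
    t^m K_i, d_i, whose only linear relations are linearity in X and
    sum_i m_i t^m K_i = 0, it amounts to operators
      rho X r   (action of X (x) t^r),
      kappa m i (action of t^m K_i),
      dd i      (action of d_i)
    subject to these linear relations and the bracket relations of tau. *)

Definition comm (V : lmodType CC) (A B : V -> V) : V -> V :=
  fun v => A (B v) - B (A v).

Definition int_to_C (k : int) : CC := k%:~R.

Record tau_module (n : nat) (g : vectType CC) (br : g -> g -> g)
  (form : g -> g -> CC) (V : lmodType CC) := TauModule {
  rho : g -> 'rV[int]_n -> V -> V;
  kappa : 'rV[int]_n -> 'I_n -> V -> V;
  dd : 'I_n -> V -> V;
  rho_linX : forall (a : CC) (X Y : g) (r : 'rV[int]_n) (v : V),
      rho (a *: X + Y) r v = a *: rho X r v + rho Y r v;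
  rho_linV : forall (X : g) (r : 'rV[int]_n) (a : CC) (u v : V),
      rho X r (a *: u + v) = a *: rho X r u + rho X r v;
  kappa_linV : forall (m : 'rV[int]_n) (i : 'I_n) (a : CC) (u v : V),
      kappa m i (a *: u + v) = a *: kappa m i u + kappa m i v;
  dd_linV : forall (i : 'I_n) (a : CC) (u v : V), dd i (a *: u + v) = a *: dd i u + dd i v;
  kappa_rel : forall (m : 'rV[int]_n) (v : V), \sum_(i < n) int_to_C (m 0 i) *: kappa m i v = 0;
  br_rho_rho : forall (X Y : g) (r s : 'rV[int]_n) (v : V),
      comm (rho X r) (rho Y s) v =
      rho (br X Y) (r + s) v
      + form X Y *: \sum_(i < n) int_to_C (r 0 i) *: kappa (r + s) i v;
  br_rho_kappa : forall (X : g) (r m : 'rV[int]_n) (i : 'I_n) (v : V), comm (rho X r) (kappa m i) v = 0;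
  br_kappa_kappa : forall (m : 'rV[int]_n) (i : 'I_n) (m' : 'rV[int]_n) (j : 'I_n) (v : V), comm (kappa m i) (kappa m' j) v = 0;
  br_dd_rho : forall (i : 'I_n) (X : g) (r : 'rV[int]_n) (v : V),
      comm (dd i) (rho X r) v = int_to_C (r 0 i) *: rho X r v;
  br_dd_kappa : forall (i : 'I_n) (m : 'rV[int]_n) (j : 'I_n) (v : V),
      comm (dd i) (kappa m j) v = int_to_C (m 0 i) *: kappa m j v;
  br_dd_dd : forall (i j : 'I_n) (v : V), comm (dd i) (dd j) v = 0
}.

Section TauModuleNotions.
Variables (n : nat) (g : vectType CC) (br : g -> g -> g) (form : g -> g -> CC).
Variables (V : lmodType CC) (M : tau_module n br form V).

Definition tau_submodule (W : V -> Prop) : Prop :=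
  [/\ W 0,
      (forall (a : CC) (u v : V), W u -> W v -> W (a *: u + v)),
      (forall X r v, W v -> W (rho M X r v)),
      (forall m i v, W v -> W (kappa M m i v)) &
      (forall i v, W v -> W (dd M i v))].

Definition tau_irreducible : Prop :=
  (exists v : V, v <> 0) /\
  (forall W, tau_submodule W -> (forall v, W v -> v = 0) \/ (forall v, W v)).

(** weight spaces w.r.t. h = h0 (+) span(K_i) (+) D.  A weight is given by
    its values: lam on h0 (only its restriction to h0 matters),
    k i = lambda(K_i), e i = lambda(d_i). *)
Definition weight_space (h0 : {vspace g}) (lam : g -> CC) (k e : 'I_n -> CC)
    (v : V) : Prop :=
  [/\ (forall H, H \in h0 -> rho M H 0 v = lam H *: v),
      (forall i, kappa M 0 i v = k i *: v) &
      (forall i, dd M i v = e i *: v)].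

Definition weight_vector (h0 : {vspace g}) (v : V) : Prop :=
  exists lam k e, weight_space h0 lam k e v.

Definition fin_dim (W : V -> Prop) : Prop :=
  exists s : seq V, forall v,
    W v <-> exists c : 'I_(size s) -> CC, v = \sum_(j < size s) c j *: s`_j.

Definition fin_dim_weight_spaces (h0 : {vspace g}) : Prop :=
  (forall v : V, exists ws : seq V,
      (forall w, w \in ws -> weight_vector h0 w) /\ v = \sum_(w <- ws) w) /\
  (forall lam k e, fin_dim (weight_space h0 lam k e)).

(** action of the homogeneous central element z = sum_i c_i t^m K_i *)
Definition z_action (m : 'rV[int]_n) (c : 'I_n -> CC) (v : V) : V :=
  \sum_(i < n) c i *: kappa M m i v.

Definition central_operator (m : 'rV[int]_n) (T : V -> V) : Prop :=
  [/\ (forall (a : CC) (u v : V), T (a *: u + v) = a *: T u + T v),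
      (forall X r v, T (rho M X r v) = rho M X r (T v)),
      (forall m' i v, T (kappa M m' i v) = kappa M m' i (T v)) &
      (forall i v, dd M i (T v) - T (dd M i v) = int_to_C (m 0 i) *: T v)].
End TauModuleNotions.

From HB Require Import structures.
From mathcomp Require Import all_boot all_order all_algebra.
From mathcomp Require Import complex Rstruct.
Set Implicit Arguments. Unset Strict Implicit. Unset Printing Implicit Defensive.
Import GRing.Theory.
Local Open Scope ring_scope.

(* The element z acts on V by a central operator of degree m.  The kernel and
   the image of any central operator are tau-submodules (the degree only
   shifts the action of the d_i), so by irreducibility a nonzero central
   operator is bijective, as in Schur's lemma.  Its inverse again commutes
   with g (x) A (+) Z and shifts the d_i-action by -m. *)

Section CentralOperators.
Variables (n : nat) (g : vectType CC) (br : g -> g -> g) (form : g -> g -> CC).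
Variables (V : lmodType CC) (M : tau_module n br form V).

HB.instance Definition _ (X : g) (r : 'rV[int]_n) :=
  GRing.isLinear.Build CC V V *:%R (rho M X r) (rho_linV M X r).
HB.instance Definition _ (m : 'rV[int]_n) (i : 'I_n) :=
  GRing.isLinear.Build CC V V *:%R (kappa M m i) (kappa_linV M m i).
HB.instance Definition _ (i : 'I_n) :=
  GRing.isLinear.Build CC V V *:%R (dd M i) (dd_linV M i).

Lemma kappa_central_operator (m : 'rV[int]_n) (i : 'I_n) :
  central_operator M m (kappa M m i).
Proof.
split=> [||m' j v|j v]; first exact: kappa_linV.
- by move=> X r v; apply/esym/subr0_eq/(br_rho_kappa M).
- exact/subr0_eq/(br_kappa_kappa M).
- exact: (br_dd_kappa M).
Qed.

Lemma central_operator_lincomb (m : 'rV[int]_n) (k : nat) (c : 'I_k -> CC)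
    (T : 'I_k -> V -> V) :
  (forall j, central_operator M m (T j)) ->
  central_operator M m (fun v => \sum_(j < k) c j *: T j v).
Proof.
move=> T_central; split=> [a u v|X r v|m' i v|i v].
- rewrite scaler_sumr -big_split; apply: eq_bigr => j _ /=.
  by case: (T_central j) => -> _ _ _; rewrite scalerDr !scalerA mulrC.
- rewrite linear_sum; apply: eq_bigr => j _.
  by case: (T_central j) => _ -> _ _; rewrite linearZ.
- rewrite linear_sum; apply: eq_bigr => j _.
  by case: (T_central j) => _ _ -> _; rewrite linearZ.
- rewrite linear_sum -sumrB scaler_sumr; apply: eq_bigr => j _.
  case: (T_central j) => _ _ _ T_dd.
  by rewrite linearZ /= -scalerBr T_dd !scalerA mulrC.
Qed.

Lemma z_action_central_operator (m : 'rV[int]_n) (c : 'I_n -> CC) :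
  central_operator M m (z_action M m c).
Proof. exact/central_operator_lincomb/kappa_central_operator. Qed.

Section OneCentralOperator.
Variables (m : 'rV[int]_n) (T : V -> V).
Hypothesis T_central : central_operator M m T.

Let T_linear : linear T. Proof. by case: T_central. Qed.
HB.instance Definition _ := GRing.isLinear.Build CC V V *:%R T T_linear.

Lemma central_operator_rho X r v : T (rho M X r v) = rho M X r (T v).
Proof. by case: T_central. Qed.

Lemma central_operator_kappa m' i v : T (kappa M m' i v) = kappa M m' i (T v).
Proof. by case: T_central. Qed.

Lemma central_operator_dd i v :
  dd M i (T v) = T (dd M i v + int_to_C (m 0 i) *: v).
Proof.
case: T_central => _ _ _ T_dd.
by rewrite linearD linearZ /= -T_dd addrC subrK.
Qed.

Lemma central_operator_kernel_submodule : tau_submodule M (fun v => T v = 0).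
Proof.
split=> [|a u v Tu Tv|X r v Tv|m' i v Tv|i v Tv]; first exact: linear0.
- by rewrite linearP /= Tu Tv scaler0 addr0.
- by rewrite central_operator_rho Tv linear0.
- by rewrite central_operator_kappa Tv linear0.
- apply: (@addIr _ (T (int_to_C (m 0 i) *: v))).
  by rewrite -linearD /= -central_operator_dd linearZ /= Tv linear0 scaler0 addr0.
Qed.

Lemma central_operator_image_submodule :
  tau_submodule M (fun v => exists u, T u = v).
Proof.
split=> [|a _ _ [u <-] [w <-]|X r _ [u <-]|m' i _ [u <-]|i _ [u <-]].
- by exists 0; rewrite linear0.
- by exists (a *: u + w); rewrite linearP.
- by exists (rho M X r u); rewrite central_operator_rho.
- by exists (kappa M m' i u); rewrite central_operator_kappa.
- by exists (dd M i u + int_to_C (m 0 i) *: u); rewrite central_operator_dd.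
Qed.

Lemma central_operator_inverse (S : V -> V) :
  cancel T S -> cancel S T -> central_operator M (- m) S.
Proof.
move=> TK SK; split=> [a u v|X r v|m' i v|i v].
- by rewrite -{1}(SK u) -{1}(SK v) -linearP TK.
- by rewrite -{1}(SK v) -central_operator_rho TK.
- by rewrite -{1}(SK v) -central_operator_kappa TK.
- have -> : S (dd M i v) = dd M i (S v) + int_to_C (m 0 i) *: S v.
    by rewrite -{1}(SK v) central_operator_dd TK.
  by rewrite /int_to_C mxE mulrNz scaleNr opprD addrA subrr add0r.
Qed.

Section Irreducible.
Hypothesis V_irr : tau_irreducible M.
Hypothesis T_nonzero : exists v, T v != 0.

Lemma central_operator_inj : injective T.
Proof.
have T_ker0 w : T w = 0 -> w = 0.
  have [ker0|kerT] := V_irr.2 _ central_operator_kernel_submodule; first exact: ker0.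
  by case: T_nonzero => v; rewrite kerT eqxx.
by move=> u w /eqP; rewrite -subr_eq0 -linearB => /eqP/T_ker0/subr0_eq.
Qed.

Lemma central_operator_surj v : exists u, T u == v.
Proof.
have [im0|imT] := V_irr.2 _ central_operator_image_submodule.
  by case: T_nonzero => u /negP[]; apply/eqP/im0; exists u.
by have [u <-] := imT v; exists u.
Qed.

Lemma central_operator_invertible :
  exists S, [/\ central_operator M (- m) S, cancel T S & cancel S T].
Proof.
pose S v := xchoose (central_operator_surj v).
have SK : cancel S T by move=> v; apply/eqP/(xchooseP (central_operator_surj v)).
have TK : cancel T S by move=> u; apply: central_operator_inj; rewrite SK.
by exists S; split; first exact: central_operator_inverse.
Qed.

End Irreducible.
End OneCentralOperator.
End CentralOperators.

Theorem lemma4p4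
  (n : nat) (hn : (2 <= n)%N)
  (g : vectType CC) (br : g -> g -> g) (form : g -> g -> CC) (h0 : {vspace g})
  (g_simple : simple_lie br)
  (h0_cartan : cartan_subalgebra br h0)
  (form_ok : nondeg_invariant_symmetric_form br form)
  (V : lmodType CC) (M : tau_module n br form V)
  (V_irr : tau_irreducible M)
  (V_wt : fin_dim_weight_spaces M h0)
  (m : 'rV[int]_n) (c : 'I_n -> CC)
  (z_nontrivial : exists v : V, z_action M m c v != 0) :
  exists T : V -> V,
    central_operator M (- m) T /\
    (forall v : V, T (z_action M m c v) = v) /\
    (forall v : V, z_action M m c (T v) = v).
Proof.
have [T [T_central zK TK]] :=
  central_operator_invertible (z_action_central_operator M m c) V_irr z_nontrivial.
by exists T.
Qed.
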